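(* Let $\varepsilon\in(0,1]$, let $\mathcal D$ be a distribution on $\mathbb R^d$, let $f:\mathbb R^d\to\{0,1\}$ be measurable, and let $S=\{x_1,\dots,x_N\}\subset\mathbb R^d$. For a matrix $A$ write $\mathcal L(A)=\mathbb E_{x\sim\mathcal D}\sum_{i=1}^N p_{S,A}(x_i,x)\,|f(x_i)-f(x)|$. Then $$\Big|\min_{A\in\mathcal A_\varepsilon}\mathcal L(A)-\inf_{A\in\mathcal A}\mathcal L(A)\Big|\le15\,\varepsilon.$$
   Context: $K_A(x,y)=\frac{1}{1+\|A(x-y)\|_2^2}$ and $p_{S,A}(x_i,x)=\frac{K_A(x_i,x)}{\sum_{j=1}^N K_A(x_j,x)}$. $\mathcal A$ is the set of diagonal $d\times d$ real matrices whose diagonal entries all lie in $[1,2]$. $\mathcal A_\varepsilon$ is the finite set of diagonal $d\times d$ matrices whose diagonal entries all lie in $G_\varepsilon=\{(1+\varepsilon)^k: k\in\mathbb Z_{\ge0},\ (1+\varepsilon)^k\le2\}$. *)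

From HB Require Import structures.
From mathcomp Require Import all_boot all_order all_algebra.
From mathcomp Require Import all_classical all_reals all_analysis.
Set Implicit Arguments. Unset Strict Implicit. Unset Printing Implicit Defensive.
Import Order.TTheory GRing.Theory Num.Theory.
Local Open Scope ring_scope.
Local Open Scope classical_set_scope.

(* Points of R^d are d.-tuples of reals; d.-tuple R carries the library's
   product (Borel) sigma-algebra generated by the coordinate projections. *)

Definition sqnormA {R : realType} {d : nat} (A : 'M[R]_d) (x y : d.-tuple R) : R :=
  \sum_(i < d) (\sum_(j < d) A i j * (tnth x j - tnth y j)) ^+ 2.

Definition KA {R : realType} {d : nat} (A : 'M[R]_d) (x y : d.-tuple R) : R :=
  (1 + sqnormA A x y)^-1.

Definition pSA {R : realType} {d N : nat} (S : 'I_N -> d.-tuple R)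
  (A : 'M[R]_d) (xi x : d.-tuple R) : R :=
  KA A xi x / \sum_(j < N) KA A (S j) x.

Definition diagA {R : realType} (d : nat) : set 'M[R]_d :=
  [set A | is_diag_mx A /\ forall i, 1 <= A i i <= 2].

Definition Geps {R : realType} (eps : R) : set R :=
  [set r | exists k : nat, r = (1 + eps) ^+ k /\ (1 + eps) ^+ k <= 2].

Definition diagAeps {R : realType} (d : nat) (eps : R) : set 'M[R]_d :=
  [set A | is_diag_mx A /\ forall i, Geps eps (A i i)].

(* L(A) = E_{x ~ D} sum_i p_{S,A}(x_i,x) |f(x_i) - f(x)|
   (the integrand lies in [0,1], so the integral is finite and we take its
   real value) *)
Definition lossL {R : realType} {d N : nat}
  (D : probability (d.-tuple R) R) (f : d.-tuple R -> R)
  (S : 'I_N -> d.-tuple R) (A : 'M[R]_d) : R :=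
  fine (\int[D]_x (\sum_(i < N) pSA S A (S i) x * `|f (S i) - f x|)%:E)%E.

Arguments diagA {R} d.
Arguments diagAeps {R} d eps.

(* For a diagonal matrix A with diagonal in [1,2], round every diagonal entry
   A_ii down to the largest grid point (1+eps)^k below it; call the result A'.
   Then A'_ii <= A_ii <= (1+eps) A'_ii, hence for every pair of points
     K_A <= K_A' <= (1+eps)^2 K_A,
   so every weight p_{S,A'}(x_i,x) is at most (1+eps)^2 p_{S,A}(x_i,x), and after
   integrating, L(A') <= (1+eps)^2 L(A) <= L(A) + 3 eps because L(A) <= 1.
   Since the grid family A_eps is contained in A, the two infima therefore
   differ by at most 3 eps <= 15 eps. *)
From HB Require Import structures.
From mathcomp Require Import all_boot all_order all_algebra.
From mathcomp Require Import all_classical all_reals all_analysis.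
From mathcomp Require Import lra.
Import Order.TTheory GRing.Theory Num.Theory.
Local Open Scope ring_scope.
Local Open Scope classical_set_scope.

(* [diag_within c B A]: the diagonal of B lies between (diagonal of A) / c and
   the diagonal of A; this is how a rounded-down grid matrix B relates to A. *)
Definition diag_within {R : realType} {d : nat} (c : R) (B A : 'M[R]_d) : Prop :=
  forall i, 0 <= B i i <= A i i /\ A i i <= c * B i i.

Section Kernel.
Context {R : realType} {d : nat}.
Implicit Types (A B : 'M[R]_d) (x y : d.-tuple R).

Lemma sqnormA_ge0 A x y : 0 <= sqnormA A x y.
Proof. by apply: sumr_ge0 => i _; exact: sqr_ge0. Qed.

Lemma KA_gt0 A x y : 0 < KA A x y.
Proof. by rewrite /KA invr_gt0 ltr_wpDr ?sqnormA_ge0. Qed.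

Lemma KA_ge0 A x y : 0 <= KA A x y.
Proof. exact: ltW (KA_gt0 _ _ _). Qed.

Lemma sqnormA_diag A x y : is_diag_mx A ->
  sqnormA A x y = \sum_(i < d) (A i i * (tnth x i - tnth y i)) ^+ 2.
Proof.
move=> /is_diag_mxP dA; apply: eq_bigr => i _; congr (_ ^+ 2).
rewrite (bigD1 i) //= big1 ?addr0 // => j ji.
by rewrite dA ?mul0r // eq_sym.
Qed.

Lemma sqnormA_diag_le A B (k : R) x y : is_diag_mx A -> is_diag_mx B ->
  (forall i, A i i ^+ 2 <= k * B i i ^+ 2) ->
  sqnormA A x y <= k * sqnormA B x y.
Proof.
move=> dA dB hAB; rewrite !sqnormA_diag // mulr_sumr; apply: ler_sum => i _.
rewrite !exprMn [k * _]mulrA; apply: ler_wpM2r; [exact: sqr_ge0 | exact: hAB].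
Qed.

Lemma inv1D_le_scale (s t k : R) : 0 <= s -> 0 <= t -> 1 <= k -> t <= k * s ->
  (1 + s)^-1 <= k * (1 + t)^-1.
Proof.
move=> s0 t0 k1 hts.
have s1 : 0 < 1 + s by rewrite ltr_wpDr.
have t1 : 0 < 1 + t by rewrite ltr_wpDr.
rewrite ler_pdivlMr // mulrC ler_pdivrMr //; nra.
Qed.

Lemma KA_within A B (c : R) x y : is_diag_mx A -> is_diag_mx B ->
  1 <= c -> diag_within c B A ->
  KA A x y <= KA B x y /\ KA B x y <= c ^+ 2 * KA A x y.
Proof.
move=> dA dB c1 hBA.
have hBA_le : sqnormA B x y <= 1 * sqnormA A x y.
  apply: sqnormA_diag_le => // i; have [/andP[? ?] _] := hBA i.
  rewrite mul1r !expr2; nra.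
have hAB_le : sqnormA A x y <= c ^+ 2 * sqnormA B x y.
  apply: sqnormA_diag_le => // i; have [/andP[? ?] ?] := hBA i.
  rewrite -exprMn !expr2; nra.
rewrite mul1r in hBA_le; split.
  by rewrite /KA lef_pV2 ?posrE ?ltr_wpDr ?sqnormA_ge0 // lerD2l.
by apply: inv1D_le_scale; rewrite ?sqnormA_ge0 ?exprn_ege1.
Qed.

End Kernel.

Lemma ratio_le {R : realType} {I : finType} (u v : I -> R) (k : R) (i : I) :
  (forall j, 0 < u j) -> (forall j, u j <= v j) -> v i <= k * u i ->
  v i / \sum_j v j <= k * (u i / \sum_j u j).
Proof.
move=> u0 uv hi.
have su0 : 0 < \sum_j u j.
  by rewrite (bigD1 i) //= ltr_wpDr // sumr_ge0 // => j _; exact: ltW.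
have suv : \sum_j u j <= \sum_j v j by apply: ler_sum => j _.
rewrite mulrA; apply: ler_pM => //.
- exact: le_trans (ltW (u0 i)) (uv i).
- by rewrite invr_ge0 (le_trans (ltW su0)).
- by rewrite lef_pV2 ?posrE // (lt_le_trans su0).
Qed.

Lemma measurable_funV_pos {R : realType} {dT : measure_display}
  {T : measurableType dT} (g : T -> R) :
  measurable_fun setT g -> (forall x, 0 < g x) ->
  measurable_fun setT (fun x => (g x)^-1).
Proof.
move=> mg g0.
have minv : measurable_fun (`]0, +oo[ : set R) (@GRing.inv R).
  apply: measurable_realfun.open_continuous_measurable_fun.
    exact: interval_open.
  move=> z; rewrite inE /= in_itv /= andbT => z0.
  by apply: inv_continuous; rewrite gt_eqF.
apply: (measurable_comp (F := (`]0, +oo[ : set R))) => //.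
by move=> _ [x _ <-]; rewrite /= in_itv /= andbT.
Qed.

Lemma measurable_KA {R : realType} {d : nat} (A : 'M[R]_d) (y : d.-tuple R) :
  measurable_fun setT (fun x : d.-tuple R => KA A y x).
Proof.
apply: measurable_funV_pos => [|x]; last by rewrite ltr_wpDr ?sqnormA_ge0.
apply: measurable_realfun.measurable_funD => //.
apply: measurable_sum => i; apply: measurable_realfun.measurable_funX.
apply: measurable_sum => j; apply: measurable_realfun.measurable_funM => //.
by apply: measurable_realfun.measurable_funB => //; exact: measurable_tnth.
Qed.

Section PointwiseLoss.
Context {R : realType} {d N : nat} (S : 'I_N -> d.-tuple R)
  (f : d.-tuple R -> R).
Implicit Types (A B : 'M[R]_d) (x : d.-tuple R).

Definition pointLoss A x : R :=
  \sum_(i < N) pSA S A (S i) x * `|f (S i) - f x|.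

Lemma pSA_ge0 A y x : 0 <= pSA S A y x.
Proof. by rewrite /pSA divr_ge0 ?KA_ge0 ?sumr_ge0 // => j _; exact: KA_ge0. Qed.

Lemma pointLoss_ge0 A x : 0 <= pointLoss A x.
Proof. by apply: sumr_ge0 => i _; rewrite mulr_ge0 ?pSA_ge0. Qed.

(* With a {0,1}-valued label the integrand is a sub-probability average. *)
Lemma pointLoss_le1 A x : (forall z, f z = 0 \/ f z = 1) -> pointLoss A x <= 1.
Proof.
move=> f01.
have hdiff z w : `|f z - f w| <= 1.
  by case: (f01 z) => ->; case: (f01 w) => ->;
    rewrite ?subrr ?normr0 ?sub0r ?subr0 ?normrN ?normr1.
apply: (@le_trans _ _ (\sum_(i < N) pSA S A (S i) x)).
  apply: ler_sum => i _; rewrite -[X in _ <= X]mulr1.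
  by apply: ler_wpM2l; [exact: pSA_ge0 | exact: hdiff].
rewrite /pSA -mulr_suml; set s := \sum_(j < N) _.
by have [->|s0] := eqVneq s 0; rewrite ?mul0r // mulfV.
Qed.

Lemma pointLoss_within A B (c : R) x : is_diag_mx A -> is_diag_mx B ->
  1 <= c -> diag_within c B A -> pointLoss B x <= c ^+ 2 * pointLoss A x.
Proof.
move=> dA dB c1 hBA; rewrite /pointLoss mulr_sumr; apply: ler_sum => i _.
rewrite mulrA; apply: ler_wpM2r => //.
apply: ratio_le => [j|j|]; first exact: KA_gt0.
- by have [] := KA_within A B c (S j) x dA dB c1 hBA.
- by have [] := KA_within A B c (S i) x dA dB c1 hBA.
Qed.

Lemma measurable_pointLoss A :
  measurable_fun setT f -> measurable_fun setT (pointLoss A).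
Proof.
move=> mf; apply: measurable_sum => i.
apply: measurable_realfun.measurable_funM; last first.
  by apply: measurableT_comp => //; exact: measurable_realfun.measurable_funB.
apply: measurable_realfun.measurable_funM; first exact: measurable_KA.
apply: measurable_funV_pos => [|x]; first by apply: measurable_sum => j; exact: measurable_KA.
by rewrite (bigD1 i) //= ltr_wpDr ?KA_gt0 ?sumr_ge0 // => j _; exact: KA_ge0.
Qed.

End PointwiseLoss.

Section Expectation.
Context {R : realType} {dT : measure_display} {T : measurableType dT}.
Variable (P : probability T R).
Local Open Scope ereal_scope.

Lemma integral_unit_bounds (g : T -> R) : measurable_fun setT g ->
  (forall x, (0 <= g x <= 1)%R) ->
  \int[P]_x (g x)%:E \is a fin_num /\ (0 <= fine (\int[P]_x (g x)%:E) <= 1)%R.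
Proof.
move=> mg hg.
have i0 : 0 <= \int[P]_x (g x)%:E.
  by apply: integral_ge0 => x _; rewrite lee_fin; case/andP: (hg x).
have i1 : \int[P]_x (g x)%:E <= 1.
  apply: (@le_trans _ _ (\int[P]_x (cst 1%E) x)).
    apply: ge0_le_integral => //.
    - by move=> x _; rewrite lee_fin; case/andP: (hg x).
    - exact/measurable_realfun.measurable_EFinP.
    - by move=> x _; rewrite /= lee_fin; case/andP: (hg x).
  by rewrite integral_cst // mul1e; exact: probability_le1.
have fi : \int[P]_x (g x)%:E \is a fin_num.
  by rewrite ge0_fin_numE // (le_lt_trans i1) // ltey.
by split => //; rewrite -!lee_fin fineK // i0 i1.
Qed.

Lemma integral_le_scale (g h : T -> R) (c : R) : measurable_fun setT g ->
  measurable_fun setT h -> (forall x, 0 <= g x)%R -> (forall x, 0 <= h x)%R ->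
  (0 <= c)%R -> (forall x, g x <= c * h x)%R ->
  \int[P]_x (g x)%:E <= c%:E * \int[P]_x (h x)%:E.
Proof.
move=> mg mh g0 h0 c0 hgh.
rewrite -ge0_integralZl_EFin //; last first.
- exact/measurable_realfun.measurable_EFinP.
- by move=> x _; rewrite lee_fin.
apply: ge0_le_integral => //.
- by move=> x _; rewrite lee_fin.
- exact/measurable_realfun.measurable_EFinP.
- by apply: emeasurable_funM => //; exact/measurable_realfun.measurable_EFinP.
- by move=> x _; rewrite -EFinM lee_fin.
Qed.

End Expectation.

Section Loss.
Context {R : realType} {d N : nat} (D : probability (d.-tuple R) R)
  (f : d.-tuple R -> R) (S : 'I_N -> d.-tuple R).
Hypothesis (mf : measurable_fun setT f) (f01 : forall x, f x = 0 \/ f x = 1).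

Let pointLoss_unit (A : 'M[R]_d) x : 0 <= pointLoss S f A x <= 1.
Proof. by rewrite pointLoss_ge0 pointLoss_le1. Qed.

Lemma lossL_bounds (A : 'M[R]_d) : 0 <= lossL D f S A <= 1.
Proof.
by have [] := integral_unit_bounds D _ (measurable_pointLoss S f A mf) (pointLoss_unit A).
Qed.

Lemma lossL_within (A B : 'M[R]_d) (c : R) : is_diag_mx A -> is_diag_mx B ->
  1 <= c -> diag_within c B A -> lossL D f S B <= c ^+ 2 * lossL D f S A.
Proof.
move=> dA dB c1 hBA.
have [finA _] := integral_unit_bounds D _ (measurable_pointLoss S f A mf) (pointLoss_unit A).
have [finB _] := integral_unit_bounds D _ (measurable_pointLoss S f B mf) (pointLoss_unit B).
rewrite /lossL -lee_fin EFinM (fineK finA) (fineK finB).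
apply: integral_le_scale; rewrite ?exprn_ge0 ?(le_trans ler01) //.
- exact: measurable_pointLoss.
- exact: measurable_pointLoss.
- exact: pointLoss_ge0.
- exact: pointLoss_ge0.
- by move=> x; exact: pointLoss_within.
Qed.

End Loss.

Lemma bernoulli_ineq {R : realType} (e : R) (n : nat) :
  0 <= e -> 1 + n%:R * e <= (1 + e) ^+ n.
Proof.
move=> e0; elim: n => [|n IH]; first by rewrite mul0r addr0 expr0.
rewrite exprS -natr1 mulrDl mul1r.
have ne0 : 0 <= n%:R * e by rewrite mulr_ge0.
have pow1 : 1 <= (1 + e) ^+ n by rewrite exprn_ege1 // lerDl.
nra.
Qed.

Lemma grid_bracket {R : realType} (e a : R) : 0 < e -> 1 <= a ->
  exists k : nat, (1 + e) ^+ k <= a /\ a <= (1 + e) * (1 + e) ^+ k.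
Proof.
move=> e0 a1.
pose bracket := exists k : nat, (1 + e) ^+ k <= a /\ a <= (1 + e) * (1 + e) ^+ k.
have below n : bracket \/ (1 + e) ^+ n <= a.
  elim: n => [|n [|IH]]; [by right; rewrite expr0 | by left |].
  have [h|h] := leP a ((1 + e) ^+ n.+1); last by right; exact: ltW.
  by left; exists n; rewrite -exprS.
have [n hn] : exists n : nat, a < 1 + n%:R * e.
  exists (Num.truncn (a / e)).+1.
  have := truncnS_gt (a / e); rewrite -(ltr_pM2r e0) mulfVK ?gt_eqF // => h.
  by rewrite ltr_wpDl.
case: (below n) => // h; have := bernoulli_ineq e n (ltW e0); lra.
Qed.

Definition gridM {R : realType} {d : nat} (e : R) (k : 'I_d -> nat) : 'M[R]_d :=
  \matrix_(i, j) if i == j then (1 + e) ^+ k i else 0.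

Lemma gridM_diag {R : realType} {d : nat} (e : R) k : is_diag_mx (@gridM R d e k).
Proof.
by apply/is_diag_mxP => i j ne; rewrite mxE ifF //; apply: contraNF ne => /eqP ->.
Qed.

Lemma gridM_ii {R : realType} {d : nat} (e : R) k i :
  @gridM R d e k i i = (1 + e) ^+ k i.
Proof. by rewrite mxE eqxx. Qed.

Lemma grid_rounding {R : realType} {d : nat} (e : R) (A : 'M[R]_d) :
  0 < e -> diagA d A -> exists2 B, diagAeps d e B & diag_within (1 + e) B A.
Proof.
move=> e0 [dA hA].
have hk i := grid_bracket e (A i i) e0 (proj1 (andP (hA i))).
pose k i := proj1_sig (cid (hk i)).
have kP i : (1 + e) ^+ k i <= A i i /\ A i i <= (1 + e) * (1 + e) ^+ k i.
  exact: proj2_sig (cid (hk i)).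
exists (gridM e k).
  split=> [|i]; first exact: gridM_diag.
  rewrite gridM_ii; exists (k i); split => //.
  by apply: le_trans (proj1 (kP i)) _; case/andP: (hA i).
move=> i; rewrite gridM_ii; have [kA Ak] := kP i.
by rewrite kA Ak exprn_ge0 // ler_wpDr // ltW.
Qed.

Lemma diagAeps_sub {R : realType} {d : nat} {e : R} :
  0 < e -> diagAeps d e `<=` diagA d.
Proof.
move=> e0 A [dA hA]; split => // i; have [k [-> k2]] := hA i.
by rewrite k2 exprn_ege1 // lerDl ltW.
Qed.

Theorem mainTheorem12 (R : realType) (d N : nat) (eps : R)
  (D : probability (d.-tuple R) R) (f : d.-tuple R -> R)
  (S : 'I_N -> d.-tuple R) :
  0 < eps <= 1 ->
  measurable_fun setT f ->
  (forall x, f x = 0 \/ f x = 1) ->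
  injective S ->
  `| inf [set lossL D f S A | A in diagAeps d eps]
     - inf [set lossL D f S A | A in diagA d] | <= 15 * eps.
Proof.
move=> /andP[e0 e1] mf f01 _.
set Lgrid := [set lossL D f S A | A in diagAeps d eps].
set Lall := [set lossL D f S A | A in diagA d].
have Lb A := lossL_bounds D f S mf f01 A.
have lb_grid : has_lbound Lgrid by exists 0 => _ [A _ <-]; case/andP: (Lb A).
have lb_all : has_lbound Lall by exists 0 => _ [A _ <-]; case/andP: (Lb A).
have c1 : 1 <= 1 + eps by rewrite lerDl ltW.
have id_all : diagA d (1%:M : 'M[R]_d).
  by split=> [|i]; rewrite ?scalar_mx_is_diag // mxE eqxx lexx ler1n.
have [B0 B0grid _] := grid_rounding eps _ e0 id_all.
have grid_le : inf Lall <= inf Lgrid.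
  apply: lb_le_inf; first by exists (lossL D f S B0), B0.
  by move=> _ [A hA <-]; apply: ge_inf => //; exists A => //; exact: (diagAeps_sub e0).
have all_ge : inf Lgrid - 3 * eps <= inf Lall.
  apply: lb_le_inf; first by exists (lossL D f S B0), B0 => //; exact: (diagAeps_sub e0).
  move=> _ [A hA <-]; have [B hB hBA] := grid_rounding eps A e0 hA.
  have hLB := lossL_within D f S mf f01 _ _ _ hA.1 hB.1 c1 hBA.
  have hinf : inf Lgrid <= lossL D f S B by apply: ge_inf => //; exists B.
  have /andP[l0 l1] := Lb A; rewrite lerBlDr; nra.
rewrite ler_norml; apply/andP; split; lra.
Qed.
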